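(* Let $\mathcal{D}_D$ (the Defender data) and $\mathcal{D}_R$ (the Reserved data) be finite, nonempty, disjoint sets of samples, and let $\ell$ be the loss function used to train the Defender model, assumed bounded with $0 \le \ell(x) \le 1$ for all $x$. Let $e_R = \mathbb{E}_{u \sim \mathcal{D}_R}[\ell(u)]$ and $e_D = \mathbb{E}_{u \sim \mathcal{D}_D}[\ell(u)]$, with $u$ drawn uniformly. If $e_R > e_D$, then there is an LTU attack strategy whose LTU membership classification accuracy satisfies $$A_{ltu} \ge \tfrac{1}{2} + \tfrac{1}{2}(e_R - e_D).$$
   Context: An LTU (Leave-Two-Unlabeled) round is as follows: a Defender sample $d$ is drawn uniformly from $\mathcal{D}_D$ and a Reserved sample $r$ is drawn uniformly from $\mathcal{D}_R$, independently; the two samples are presented to the attacker as a pair $(u_1,u_2)$ in uniformly random order, with their membership labels hidden (exactly one of $u_1,u_2$ belongs to $\mathcal{D}_D$). The attacker (which may evaluate $\ell$ and may use its own independent randomness) must predict which of $u_1,u_2$ belongs to $\mathcal{D}_D$. The LTU membership classification accuracy $A_{ltu}$ is the probability (over the draw of $d$, $r$, the ordering, and the attacker's randomness) that this prediction is correct. *)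

From HB Require Import structures.
From mathcomp Require Import all_boot all_order all_algebra.
Set Implicit Arguments. Unset Strict Implicit. Unset Printing Implicit Defensive.
Import Order.TTheory GRing.Theory Num.Theory.
Local Open Scope ring_scope.

Definition umean (R : realFieldType) (T : finType) (A : {set T}) (f : T -> R) : R :=
  (\sum_(u in A) f u) / #|A|%:R.

(* A (randomized) LTU attack strategy: given the losses (a1, a2) of the two
   presented samples (u1, u2), p a1 a2 is the probability with which the
   attacker predicts that u1 is the Defender sample (otherwise it predicts u2).
   The attacker only sees the samples through the loss ell; it uses its own
   independent randomness, encoded by the probability p. *)
Definition valid_strategy (R : realFieldType) (p : R -> R -> R) : Prop :=
  forall a b : R, 0 <= p a b <= 1.

(* LTU membership classification accuracy: d uniform in DD, r uniform in DR,
   independent; with probability 1/2 the pair is (d, r) (correct iff the attacker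
   predicts u1), with probability 1/2 it is (r, d) (correct iff it predicts u2). *)
Definition ltu_accuracy (R : realFieldType) (T : finType) (DD DR : {set T})
    (ell : T -> R) (p : R -> R -> R) : R :=
  (\sum_(d in DD) \sum_(r in DR)
      (2^-1 * p (ell d) (ell r) + 2^-1 * (1 - p (ell r) (ell d))))
  / (#|DD|%:R * #|DR|%:R).

(* The attacker guesses that u1 is the Defender sample with probability
   (1 + l(u2) - l(u1)) / 2, which lies in [0, 1] because the loss does.  For a
   pair (d, r) in either order it is then right with probability
   (1 + l(r) - l(d)) / 2, so averaging over d and r gives an accuracy of exactly
   1/2 + (e_R - e_D)/2. *)
From HB Require Import structures.
From mathcomp Require Import all_boot all_order all_algebra.
From mathcomp Require Import ring lra.
Import Order.TTheory GRing.Theory Num.Theory.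
Local Open Scope ring_scope.

Section UniformMean.
Variables (R : realFieldType) (T : finType).

Lemma eq_umean (A : {set T}) (f g : T -> R) :
  (forall u, u \in A -> f u = g u) -> umean A f = umean A g.
Proof. by move=> efg; rewrite /umean (eq_bigr _ efg). Qed.

Lemma umeanD (A : {set T}) (f g : T -> R) :
  umean A (fun u => f u + g u) = umean A f + umean A g.
Proof. by rewrite /umean big_split mulrDl. Qed.

Lemma umeanB (A : {set T}) (f g : T -> R) :
  umean A (fun u => f u - g u) = umean A f - umean A g.
Proof. by rewrite /umean sumrB mulrBl. Qed.

Lemma umeanZ (A : {set T}) (c : R) (f : T -> R) :
  umean A (fun u => c * f u) = c * umean A f.
Proof. by rewrite /umean -mulr_sumr mulrA. Qed.

Lemma umean_cst (A : {set T}) (c : R) : A != set0 -> umean A (fun _ => c) = c.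
Proof.
move=> A0; rewrite /umean sumr_const -[c *+ _]mulr_natr mulfK //.
by rewrite pnatr_eq0 -lt0n card_gt0.
Qed.

Lemma umean_pairs (A B : {set T}) (F : T -> T -> R) :
  (\sum_(a in A) \sum_(b in B) F a b) / (#|A|%:R * #|B|%:R)
  = umean A (fun a => umean B (F a)).
Proof. by rewrite /umean -mulr_suml invfM mulrA mulrAC. Qed.

Lemma umean_pairs_gap (A B : {set T}) (f g : T -> R) (c k : R) :
  A != set0 -> B != set0 ->
  umean A (fun a => umean B (fun b => c + k * (g b - f a)))
  = c + k * (umean B g - umean A f).
Proof.
move=> A0 B0.
under eq_umean => a _ do rewrite umeanD umean_cst // umeanZ umeanB umean_cst //.
by rewrite umeanD umean_cst // umeanZ umeanB umean_cst.
Qed.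

End UniformMean.

Lemma ltu_accuracyE (R : realFieldType) (T : finType) (DD DR : {set T})
    (ell : T -> R) (p : R -> R -> R) :
  ltu_accuracy DD DR ell p
  = umean DD (fun d => umean DR (fun r =>
      2^-1 * p (ell d) (ell r) + 2^-1 * (1 - p (ell r) (ell d)))).
Proof. exact: umean_pairs. Qed.

Section LossGapStrategy.
Variable R : realFieldType.

(* Clamped so that it is a probability on all of R x R, not only on losses in [0, 1]. *)
Definition loss_gap_strategy (a b : R) : R :=
  Num.min 1 (Num.max 0 ((1 + b - a) / 2)).

Lemma loss_gap_strategy_valid : valid_strategy loss_gap_strategy.
Proof.
move=> a b; apply/andP; split; last by rewrite ge_min lexx.
by rewrite le_min ler01 le_max lexx.
Qed.

Lemma loss_gap_strategyE (a b : R) : 0 <= a <= 1 -> 0 <= b <= 1 ->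
  loss_gap_strategy a b = (1 + b - a) / 2.
Proof.
move=> /andP[a0 a1] /andP[b0 b1].
by rewrite /loss_gap_strategy max_r ?min_r //; lra.
Qed.

Lemma loss_gap_strategy_win (a b : R) : 0 <= a <= 1 -> 0 <= b <= 1 ->
  2^-1 * loss_gap_strategy a b + 2^-1 * (1 - loss_gap_strategy b a)
  = 2^-1 + 2^-1 * (b - a).
Proof. by move=> ha hb; rewrite !loss_gap_strategyE //; field. Qed.

Lemma ltu_accuracy_loss_gap (T : finType) (DD DR : {set T}) (ell : T -> R) :
  DD != set0 -> DR != set0 -> (forall x, 0 <= ell x <= 1) ->
  ltu_accuracy DD DR ell loss_gap_strategy
  = 2^-1 + 2^-1 * (umean DR ell - umean DD ell).
Proof.
move=> DD0 DR0 hell; rewrite ltu_accuracyE -umean_pairs_gap //.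
by apply: eq_umean => d _; apply: eq_umean => r _; apply: loss_gap_strategy_win.
Qed.

End LossGapStrategy.

Theorem theorem2 (R : realFieldType) (T : finType) (DD DR : {set T})
    (ell : T -> R)
    (hDD : DD != set0) (hDR : DR != set0) (hdisj : [disjoint DD & DR])
    (hell : forall x : T, 0 <= ell x <= 1)
    (hgap : umean DR ell > umean DD ell) :
  exists p : R -> R -> R, valid_strategy p /\
    ltu_accuracy DD DR ell p >= 2^-1 + 2^-1 * (umean DR ell - umean DD ell).
Proof.
exists (@loss_gap_strategy R); split; first exact: loss_gap_strategy_valid.
by rewrite ltu_accuracy_loss_gap.
Qed.
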